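(* Let $M$ and $F \geq 2$ be positive integers, $N = MF$, and let $u_l(0),\dots,u_l(M-1)$ be real numbers. Consider the zero-order hold fast-rate input $u_h(mF + i) = u_l(m)$ for all $m\in\{0,\dots,M-1\}$ and $i \in \{0,\dots,F-1\}$, with $u_h(k) = 0$ for $k<0$. Let $P \in \{1,\dots,N\}$ with $P > 2$, and let $\Phi\in\mathbb{R}^{M\times P}$ be the regressor matrix with entries $\Phi_{m,i} = u_h(mF - i)$ for $m=0,\dots,M-1$, $i=0,\dots,P-1$. Then the fast-rate FIR model of order $P$ is not unique, i.e., there exist $\theta\neq\theta^*\in\mathbb{R}^P$ with $\Phi(\theta-\theta^* )=0$.
   Context: A fast-rate FIR model of order $P$ with parameters $\theta = [\theta_0,\dots,\theta_{P-1}]^\top$ produces the fast-rate output $\hat y_h(n) = \sum_{i=0}^{P-1}\theta_i u_h(n-i)$; downsampling by factor $F$ gives the slow-rate output $\hat y_l(m) = \hat y_h(mF)$, $m=0,\dots,M-1$, so that $\hat y_l = \Phi\theta$ with $\Phi$ as in the claim. The fast-rate model is called unique (given $u_h$) if $\Phi(\theta-\theta^* )=0$ implies $\theta = \theta^*$. *)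

From HB Require Import structures.
From mathcomp Require Import all_boot all_order all_algebra.
From mathcomp Require Import reals.
Set Implicit Arguments. Unset Strict Implicit. Unset Printing Implicit Defensive.
Import Order.TTheory GRing.Theory Num.Theory.
Local Open Scope ring_scope.

Definition regressor (R : realType) (M F P : nat) (uh : int -> R) : 'M[R]_(M, P) :=
  \matrix_(m < M, i < P) uh ((m * F)%:Z - (i : nat)%:Z).

(** Under a zero-order hold input with [F >= 2], the samples [u_h(mF - 1)] and
    [u_h(mF - 2)] always coincide: for [m = 0] both are zero (causality), and
    for [m > 0] both lie in the hold interval of [u_l(m - 1)].  Hence columns 1
    and 2 of [Phi] are equal, and [e_1 - e_2] is a nonzero kernel vector. *)
From HB Require Import structures.
From mathcomp Require Import all_boot all_order all_algebra.
From mathcomp Require Import reals.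
From mathcomp Require Import zify.
Set Implicit Arguments. Unset Strict Implicit. Unset Printing Implicit Defensive.
Import Order.TTheory GRing.Theory Num.Theory.
Local Open Scope ring_scope.

Lemma delta_mx_sub_neq0 (R : nzRingType) (n : nat) (i j : 'I_n) :
  i != j -> delta_mx i 0 - delta_mx j 0 != 0 :> 'cV[R]_n.
Proof.
move=> neq_ij; apply/eqP => /matrixP /(_ i 0).
by rewrite !mxE eqxx (negPf neq_ij) /= subr0 => /eqP; rewrite oner_eq0.
Qed.

Lemma mulmx_delta_sub_eq0 (R : pzRingType) (m n : nat) (A : 'M[R]_(m, n))
    (i j : 'I_n) :
  col i A = col j A -> A *m (delta_mx i 0 - delta_mx j 0 : 'cV_n) = 0.
Proof. by move=> eq_col; rewrite mulmxBr -!colE eq_col subrr. Qed.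

Section ZeroOrderHold.

Variables (R : realType) (M F : nat) (ul : 'I_M -> R) (uh : int -> R).
Hypothesis hzoh : forall (m : 'I_M) (i : 'I_F), uh ((m * F + i)%N%:Z) = ul m.
Hypothesis hneg : forall k : int, k < 0 -> uh k = 0.

Lemma zoh_sample_in_block (m : nat) (i : nat) (hm : (m < M)%N) :
  (0 < i <= F)%N -> uh ((m.+1 * F)%N%:Z - i%:Z) = ul (Ordinal hm).
Proof.
move=> /andP[i_gt0 i_leF].
have hFi : (F - i < F)%N by lia.
have -> : (m.+1 * F)%N%:Z - i%:Z = (Ordinal hm * F + Ordinal hFi)%N%:Z
  by rewrite /=; lia.
exact: hzoh.
Qed.

Lemma regressor_col_eq (P : nat) (i j : 'I_P) :
  (0 < i <= F)%N -> (0 < j <= F)%N ->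
  col i (regressor M F P uh) = col j (regressor M F P uh).
Proof.
move=> hi hj; apply/matrixP => -[[|m] hm] k; rewrite !mxE /=.
  by rewrite mul0n !hneg //; lia.
have hm' : (m < M)%N by lia.
by rewrite !(zoh_sample_in_block hm').
Qed.

End ZeroOrderHold.

Theorem lemma2 (R : realType) (M F P : nat) (ul : 'I_M -> R) (uh : int -> R)
  (hM : (0 < M)%N) (hF : (2 <= F)%N)
  (hzoh : forall (m : 'I_M) (i : 'I_F), uh ((m * F + i)%N%:Z) = ul m)
  (hneg : forall k : int, k < 0 -> uh k = 0)
  (hP1 : (1 <= P)%N) (hPN : (P <= M * F)%N) (hP2 : (2 < P)%N) :
  exists theta thetas : 'cV[R]_P,
    theta != thetas /\ regressor M F P uh *m (theta - thetas) = 0.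
Proof.
have lt1P : (1 < P)%N by lia.
pose i1 := Ordinal lt1P; pose i2 := Ordinal hP2.
exists (delta_mx i1 0 - delta_mx i2 0), 0; rewrite subr0; split.
  exact: delta_mx_sub_neq0.
apply: mulmx_delta_sub_eq0.
by apply: (regressor_col_eq hzoh hneg) => /=; lia.
Qed.
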